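(* Let $f:2^V\to\mathbb{Z}_{\ge0}$ be a connectivity function, $W\subseteq V$, and $(C_1,C_2,C_3)$ a minimum $W$-improvement of arity 3. Then for every $W'\subseteq W$, $f(C_1\cap W')\le f(W')$. Moreover, if $f(C_1\cap W')=f(W')$, then $(C_1\cup W', C_2\setminus W', C_3\setminus W')$ is also a minimum $W$-improvement.
   Context: A connectivity function $f:2^V\to\mathbb{Z}_{\ge0}$ ($V$ finite) satisfies $f(\emptyset)=0$, $f(X)=f(V\setminus X)$, and $f(X\cup Y)+f(X\cap Y)\le f(X)+f(Y)$. For $W\subseteq V$, a $W$-improvement is a tripartition $(C_1,C_2,C_3)$ of $V$ (pairwise disjoint, possibly empty, union $V$) with $f(C_i)<f(W)/2$, $f(C_i\cap W)<f(W)$, $f(C_i\cap(V\setminus W))<f(W)$ for each $i$. Its width is $\max_i f(C_i)$, its sum-width is $\sum_i f(C_i)$, and its arity is the number of nonempty $C_i$. A $W$-improvement is minimum if it has minimum width among all $W$-improvements, subject to that minimum arity, and subject to those minimum sum-width. *)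

From mathcomp Require Import all_boot.
Set Implicit Arguments. Unset Strict Implicit. Unset Printing Implicit Defensive.

Definition connectivity_function (V : finType) (f : {set V} -> nat) : Prop :=
  [/\ f set0 = 0,
      (forall X, f X = f (~: X)) &
      (forall X Y, f (X :|: Y) + f (X :&: Y) <= f X + f Y)].

Definition tripartition (V : finType) (C1 C2 C3 : {set V}) : Prop :=
  [/\ [disjoint C1 & C2], [disjoint C1 & C3], [disjoint C2 & C3]
    & C1 :|: C2 :|: C3 = setT].

(* one part satisfies the improvement conditions; f C < f W / 2 is
   written 2 * f C < f W (exact, f integer-valued) *)
Definition good_part (V : finType) (f : {set V} -> nat) (W C : {set V}) : Prop :=
  [/\ 2 * f C < f W, f (C :&: W) < f W & f (C :&: ~: W) < f W].

Definition improvement (V : finType) (f : {set V} -> nat) (W C1 C2 C3 : {set V}) : Prop :=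
  tripartition C1 C2 C3 /\
  [/\ good_part f W C1, good_part f W C2 & good_part f W C3].

Definition width (V : finType) (f : {set V} -> nat) (C1 C2 C3 : {set V}) : nat :=
  maxn (f C1) (maxn (f C2) (f C3)).

Definition sum_width (V : finType) (f : {set V} -> nat) (C1 C2 C3 : {set V}) : nat :=
  f C1 + f C2 + f C3.

Definition arity (V : finType) (C1 C2 C3 : {set V}) : nat :=
  (C1 != set0) + (C2 != set0) + (C3 != set0).

Definition min_improvement (V : finType) (f : {set V} -> nat) (W C1 C2 C3 : {set V}) : Prop :=
  improvement f W C1 C2 C3 /\
  forall D1 D2 D3 : {set V}, improvement f W D1 D2 D3 ->
    width f C1 C2 C3 < width f D1 D2 D3 \/
    (width f C1 C2 C3 = width f D1 D2 D3 /\
     (arity C1 C2 C3 < arity D1 D2 D3 \/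
      (arity C1 C2 C3 = arity D1 D2 D3 /\
       sum_width f C1 C2 C3 <= sum_width f D1 D2 D3))).

From mathcomp Require Import all_boot.
From mathcomp Require Import zify.

Set Implicit Arguments.
Unset Strict Implicit.
Unset Printing Implicit Defensive.

(* Shifting a subset Y of W into the first part: submodularity gives
   f(C1 ∪ Y) + f(C1 ∩ Y) <= f C1 + f Y, and posimodularity gives f(Ci \ Y) <= f Ci
   (i = 2, 3) as soon as f Y <= f(Y \ Ci); the parts then stay good.
   Choose Y ⊆ W maximising the excess f(C1 ∩ Y) - f Y.  If it is positive, maximality
   applied to Y \ C2 and Y \ C3, which meet C1 as Y does, gives f Y <= f(Y \ Ci), so
   the shift has no larger width, arity at most 3 and strictly smaller sum-width,
   contradicting minimality.  If f(C1 ∩ W') = f W', the same shift loses nothing in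
   any of the three criteria, so it is again minimum. *)

Section ConnectivityFunction.
Variables (V : finType) (f : {set V} -> nat).
Hypothesis hf : connectivity_function f.

Lemma f_setC X : f (~: X) = f X.
Proof. by case: hf => _ fC _; rewrite -fC. Qed.

Lemma f_submod X Y : f (X :|: Y) + f (X :&: Y) <= f X + f Y.
Proof. by case: hf. Qed.

Lemma f_posimod X Y : f (X :\: Y) + f (Y :\: X) <= f X + f Y.
Proof.
have := f_submod X (~: Y).
by rewrite -setDE -[f (Y :\: X)]f_setC setCD setUC addnC f_setC.
Qed.

Lemma f_setU_le X Y : f Y <= f (X :&: Y) -> f (X :|: Y) <= f X.
Proof. by have := f_submod X Y; lia. Qed.

Lemma f_setD_le X Y : f Y <= f (Y :\: X) -> f (X :\: Y) <= f X.
Proof. by have := f_posimod X Y; lia. Qed.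

Section GoodPart.
Variables (W Y C : {set V}).
Hypothesis sYW : Y \subset W.

Lemma good_part_setU :
  f Y <= f (C :&: Y) -> good_part f W C -> good_part f W (C :|: Y).
Proof.
move=> leY [half inW outW].
have YW : Y :&: W = Y by apply/setIidPl.
have YCW : Y :&: ~: W = set0 by rewrite -setDE; apply/eqP; rewrite setD_eq0.
have le_CY := f_setU_le leY.
have le_CYW : f ((C :&: W) :|: Y) <= f (C :&: W).
  by apply: f_setU_le; rewrite -setIA (setIidPr sYW).
by split; rewrite ?setIUl ?YW ?YCW ?setU0; lia.
Qed.

Lemma good_part_setD :
  f Y <= f (Y :\: C) -> good_part f W C -> good_part f W (C :\: Y).
Proof.
move=> leY [half inW outW].
have YW : Y :\: W = set0 by apply/eqP; rewrite setD_eq0.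
have le_CY := f_setD_le leY.
have le_CYW : f ((C :&: W) :\: Y) <= f (C :&: W).
  by apply: f_setD_le; rewrite setDIr YW setU0.
have CYW : (C :\: Y) :&: ~: W = C :&: ~: W.
  rewrite setIDAC; apply/setDidPl; rewrite disjoint_sym disjoints_subset.
  by rewrite setCI setCK subsetU // sYW orbT.
by split; rewrite ?CYW ?setIDAC; lia.
Qed.

End GoodPart.

End ConnectivityFunction.

Section Tripartitions.
Variable V : finType.

Lemma tripartition_shift (C1 C2 C3 A : {set V}) :
  tripartition C1 C2 C3 -> tripartition (C1 :|: A) (C2 :\: A) (C3 :\: A).
Proof.
move=> [D12 D13 D23 U].
have dis_shift (Ci : {set V}) : [disjoint C1 & Ci] -> [disjoint C1 :|: A & Ci :\: A].
  rewrite !disjoints_subset setCD subUset subsetUr andbT => sC1.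
  exact: subset_trans sC1 (subsetUl _ _).
split; [exact: dis_shift | exact: dis_shift | |].
- exact: disjointW (subsetDl _ _) (subsetDl _ _) D23.
- apply/eqP; rewrite eqEsubset subsetT -U; apply/subsetP => x; rewrite !inE.
  by case: (x \in A); rewrite ?orbT ?orbF.
Qed.

Lemma arity_le3 (C1 C2 C3 : {set V}) : arity C1 C2 C3 <= 3.
Proof. by rewrite /arity; case: (C1 != set0); case: (C2 != set0); case: (C3 != set0). Qed.

Lemma setI_setD_disjoint (A B Y : {set V}) :
  [disjoint A & B] -> A :&: (Y :\: B) = A :&: Y.
Proof. by move=> /setDidPl dis; rewrite setIDA setIC -setIDA dis setIC. Qed.

End Tripartitions.

Section Minimality.
Variables (V : finType) (f : {set V} -> nat).
Variables (W C1 C2 C3 D1 D2 D3 : {set V}).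
Hypotheses (minC : min_improvement f W C1 C2 C3) (impD : improvement f W D1 D2 D3).
Hypotheses (widthD : width f D1 D2 D3 <= width f C1 C2 C3)
           (arityD : arity D1 D2 D3 <= arity C1 C2 C3).

Lemma min_improvement_sum_width_le :
  sum_width f C1 C2 C3 <= sum_width f D1 D2 D3.
Proof. by case: minC => _ /(_ _ _ _ impD); lia. Qed.

Lemma min_improvement_of_le :
  sum_width f D1 D2 D3 <= sum_width f C1 C2 C3 -> min_improvement f W D1 D2 D3.
Proof.
move=> sumD; split=> // E1 E2 E3 impE.
by case: minC => _ /(_ _ _ _ impE); lia.
Qed.

End Minimality.

Section MinimumImprovementOfArity3.
Variables (V : finType) (f : {set V} -> nat).
Hypothesis hf : connectivity_function f.
Variables (W C1 C2 C3 : {set V}).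
Hypotheses (minC : min_improvement f W C1 C2 C3) (arityC : arity C1 C2 C3 = 3).

Let impC : improvement f W C1 C2 C3 := proj1 minC.

Lemma improvement_shift (Y : {set V}) : Y \subset W ->
  f Y <= f (C1 :&: Y) -> f Y <= f (Y :\: C2) -> f Y <= f (Y :\: C3) ->
  [/\ improvement f W (C1 :|: Y) (C2 :\: Y) (C3 :\: Y),
      width f (C1 :|: Y) (C2 :\: Y) (C3 :\: Y) <= width f C1 C2 C3,
      arity (C1 :|: Y) (C2 :\: Y) (C3 :\: Y) <= arity C1 C2 C3 &
      sum_width f (C1 :|: Y) (C2 :\: Y) (C3 :\: Y) + f (C1 :&: Y)
        <= sum_width f C1 C2 C3 + f Y].
Proof.
move=> sYW le1 le2 le3; case: impC => tri [g1 g2 g3].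
have sub1 := f_submod hf C1 Y.
have le2' := f_setD_le hf le2; have le3' := f_setD_le hf le3.
split.
- split; first exact: tripartition_shift.
  split; [exact: good_part_setU | exact: good_part_setD | exact: good_part_setD].
- by rewrite /width; lia.
- by rewrite arityC arity_le3.
- by rewrite /sum_width; lia.
Qed.

Lemma f_first_part_setI_le (Y : {set V}) : Y \subset W -> f (C1 :&: Y) <= f Y.
Proof.
case: impC => -[D12 D13 _ _] _ sYW; rewrite leqNgt; apply/negP => ltY.
have [Z sZW Zmax] :=
  @arg_maxnP _ Y (fun Z => Z \subset W) (fun Z => f (C1 :&: Z) - f Z) sYW.
have ltZ : f Z < f (C1 :&: Z) by have := Zmax Y sYW; lia.
have leZ (Ci : {set V}) : [disjoint C1 & Ci] -> f Z <= f (Z :\: Ci).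
  move=> dis; have := Zmax _ (subset_trans (subsetDl Z Ci) sZW).
  by rewrite setI_setD_disjoint //; lia.
have [impS widthS arityS sumS] :=
  improvement_shift sZW (ltnW ltZ) (leZ _ D12) (leZ _ D13).
by have := min_improvement_sum_width_le minC impS widthS arityS; lia.
Qed.

Lemma min_improvement_shift (Y : {set V}) : Y \subset W -> f (C1 :&: Y) = f Y ->
  min_improvement f W (C1 :|: Y) (C2 :\: Y) (C3 :\: Y).
Proof.
case: impC => -[D12 D13 _ _] _ sYW eqY.
have leY (Ci : {set V}) : [disjoint C1 & Ci] -> f Y <= f (Y :\: Ci).
  move=> dis; rewrite -eqY -(setI_setD_disjoint Y dis).
  by apply: f_first_part_setI_le; exact: subset_trans (subsetDl Y Ci) sYW.
have [impS widthS arityS sumS] :=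
  improvement_shift sYW (eq_leq (esym eqY)) (leY _ D12) (leY _ D13).
by apply: (min_improvement_of_le minC impS widthS arityS); lia.
Qed.

End MinimumImprovementOfArity3.

Theorem lemma10 (V : finType) (f : {set V} -> nat) (W C1 C2 C3 : {set V}) :
  connectivity_function f ->
  min_improvement f W C1 C2 C3 ->
  arity C1 C2 C3 = 3 ->
  forall W' : {set V}, W' \subset W ->
    f (C1 :&: W') <= f W' /\
    (f (C1 :&: W') = f W' ->
       min_improvement f W (C1 :|: W') (C2 :\: W') (C3 :\: W')).
Proof.
move=> hf minC arityC W' sW'W; split.
- exact: (f_first_part_setI_le hf minC arityC sW'W).
- exact: (min_improvement_shift hf minC arityC sW'W).
Qed.
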